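(* Let $f:\mathbb{R}^2\to\mathbb{R}^2$ be a Topologically Anosov homeomorphism and $z_0\in\mathrm{Fix}(f)$. If $\Omega(f)\neq\{z_0\}$, then there exist $y_0\neq z_0$ and $z\in\mathbb{R}^2$ such that $y_0\in\omega(z)$.
   Context: A homeomorphism $f:\mathbb{R}^2\to\mathbb{R}^2$ is Topologically Anosov (TA) if: (i) there is a continuous strictly positive $\epsilon:\mathbb{R}^2\to\mathbb{R}$ such that for all $x\neq y$ there is $k\in\mathbb{Z}$ with $\|f^k(x)-f^k(y)\|>\epsilon(f^k(x))$; and (ii) for every continuous strictly positive $\epsilon$ there is a continuous strictly positive $\delta$ such that every $\delta$-pseudo-orbit is $\epsilon$-shadowed by an orbit. A $\delta$-pseudo-orbit is a sequence $(x_n)_{n\in\mathbb{Z}}$ with $\|f(x_n)-x_{n+1}\|<\delta(f(x_n))$; it is $\epsilon$-shadowed by the orbit of $x$ if $\|x_n-f^n(x)\|<\epsilon(x_n)$ for all $n$. $\Omega(f)$ is the nonwandering set; $\omega(z)$ is the $\omega$-limit set. *)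

From Stdlib Require Import Reals ZArith.
Open Scope R_scope.

Definition pt : Type := (R * R)%type.

Definition dist (p q : pt) : R :=
  sqrt ((fst p - fst q) ^ 2 + (snd p - snd q) ^ 2).

Definition cont_map (h : pt -> pt) : Prop :=
  forall x e, 0 < e -> exists d, 0 < d /\
    forall y, dist x y < d -> dist (h x) (h y) < e.

Definition cont_fun (h : pt -> R) : Prop :=
  forall x e, 0 < e -> exists d, 0 < d /\
    forall y, dist x y < d -> Rabs (h x - h y) < e.

Definition cont_pos (e : pt -> R) : Prop :=
  cont_fun e /\ forall x, 0 < e x.

Definition homeo (f g : pt -> pt) : Prop :=
  cont_map f /\ cont_map g /\ (forall x, g (f x) = x) /\ (forall x, f (g x) = x).

Definition iterZ (f g : pt -> pt) (k : Z) (x : pt) : pt :=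
  match k with
  | Z0 => x
  | Zpos p => Nat.iter (Pos.to_nat p) f x
  | Zneg p => Nat.iter (Pos.to_nat p) g x
  end.

Definition expansive (f g : pt -> pt) : Prop :=
  exists e, cont_pos e /\
    forall x y, x <> y -> exists k : Z,
      dist (iterZ f g k x) (iterZ f g k y) > e (iterZ f g k x).

Definition pseudo_orbit (f : pt -> pt) (delta : pt -> R) (xs : Z -> pt) : Prop :=
  forall n : Z, dist (f (xs n)) (xs (n + 1)%Z) < delta (f (xs n)).

Definition shadows (f g : pt -> pt) (e : pt -> R) (xs : Z -> pt) (x : pt) : Prop :=
  forall n : Z, dist (xs n) (iterZ f g n x) < e (xs n).

Definition shadowing (f g : pt -> pt) : Prop :=
  forall e, cont_pos e -> exists delta, cont_pos delta /\
    forall xs, pseudo_orbit f delta xs -> exists x, shadows f g e xs x.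

Definition TA (f g : pt -> pt) : Prop :=
  homeo f g /\ expansive f g /\ shadowing f g.

Definition nonwandering (f : pt -> pt) (x : pt) : Prop :=
  forall r, 0 < r -> exists (n : nat) (y : pt), (1 <= n)%nat /\
    dist y x < r /\ dist (Nat.iter n f y) x < r.

Definition omega_limit (f : pt -> pt) (z y : pt) : Prop :=
  forall r, 0 < r -> forall N : nat, exists n : nat, (N <= n)%nat /\
    dist (Nat.iter n f z) y < r.

(** A nonwandering point [x <> z0] is almost periodic up to an arbitrarily
    small jump, so it lies on periodic pseudo-orbits.  Shadowing such a
    pseudo-orbit of period [n] with the constant precision [d(x, z0) / 3]
    gives a point [z] whose iterates [f^(m n) z] all stay within
    [2 d(x, z0) / 3] of [x]; any accumulation point of them lies in
    [omega(z)] and is still different from [z0]. *)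

From Stdlib Require Import Reals ZArith Lra Lia Psatz Classical ClassicalEpsilon.
Open Scope R_scope.

Lemma dist_dist_euc (p q : pt) :
  dist p q = dist_euc (fst p) (snd p) (fst q) (snd q).
Proof. unfold dist, dist_euc, Rsqr. f_equal. ring. Qed.

Lemma dist_sym (p q : pt) : dist p q = dist q p.
Proof. rewrite !dist_dist_euc. apply distance_symm. Qed.

Lemma dist_xx (p : pt) : dist p p = 0.
Proof. rewrite dist_dist_euc. apply distance_refl. Qed.

Lemma dist_triangle (p q r : pt) : dist p r <= dist p q + dist q r.
Proof. rewrite !dist_dist_euc. apply triangle. Qed.

Lemma dist_gt0 (p q : pt) : p <> q -> 0 < dist p q.
Proof.
  destruct p as [a b], q as [c d]; intro Hpq.
  rewrite dist_dist_euc; unfold dist_euc; simpl.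
  apply sqrt_lt_R0.
  pose proof (Rle_0_sqr (a - c)); pose proof (Rle_0_sqr (b - d)).
  destruct (Req_dec a c) as [-> | Hac].
  - assert (Hbd : b - d <> 0) by (intro E; apply Hpq; f_equal; lra).
    pose proof (Rlt_0_sqr _ Hbd); lra.
  - assert (Hac' : a - c <> 0) by lra.
    pose proof (Rlt_0_sqr _ Hac'); lra.
Qed.

Lemma Rabs_fst_le_dist (p q : pt) : Rabs (fst p - fst q) <= dist p q.
Proof.
  unfold dist. rewrite <- sqrt_Rsqr_abs. apply sqrt_le_1_alt.
  pose proof (pow2_ge_0 (snd p - snd q)). unfold Rsqr. lra.
Qed.

Lemma Rabs_snd_le_dist (p q : pt) : Rabs (snd p - snd q) <= dist p q.
Proof.
  unfold dist. rewrite <- sqrt_Rsqr_abs. apply sqrt_le_1_alt.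
  pose proof (pow2_ge_0 (fst p - fst q)). unfold Rsqr. lra.
Qed.

Lemma dist_le_Rabs_add (p q : pt) :
  dist p q <= Rabs (fst p - fst q) + Rabs (snd p - snd q).
Proof.
  pose proof (Rabs_pos (fst p - fst q)); pose proof (Rabs_pos (snd p - snd q)).
  unfold dist. rewrite <- (sqrt_square (Rabs _ + Rabs _)) by lra.
  apply sqrt_le_1_alt.
  pose proof (Rsqr_abs (fst p - fst q)); pose proof (Rsqr_abs (snd p - snd q)).
  unfold Rsqr in *. nra.
Qed.

Definition cluster_point (u : nat -> pt) (l : pt) : Prop :=
  forall r, 0 < r -> forall N, exists k, (N <= k)%nat /\ dist (u k) l < r.

Lemma bounded_real_seq_cluster (v : nat -> R) (a c : R) :
  (forall k, Rabs (v k - a) <= c) ->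
  exists l, forall r, 0 < r -> forall N, exists k, (N <= k)%nat /\ Rabs (v k - l) < r.
Proof.
  intros Hv.
  destruct (Rtopology.Bolzano_Weierstrass v (fun x => a - c <= x <= a + c)
              (Rtopology.compact_P3 _ _)) as [l Hl].
  { intro k. specialize (Hv k).
    pose proof (Rle_abs (v k - a)); pose proof (Rle_abs (- (v k - a))).
    rewrite Rabs_Ropp in *. lra. }
  exists l. intros r Hr N.
  destruct (Hl (fun y => Rabs (y - l) < r) N) as [k Hk]; [|now exists k].
  now exists (mkposreal r Hr).
Qed.

(* Choose indices along which the first coordinate tends to a cluster value,
   then take a cluster value of the second coordinate along those indices. *)
Lemma bounded_seq_cluster_point (u : nat -> pt) (p : pt) (c : R) :
  (forall k, dist (u k) p <= c) -> exists l, cluster_point u l.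
Proof.
  intros Hu.
  destruct (bounded_real_seq_cluster (fun k => fst (u k)) (fst p) c) as [l1 Hl1].
  { intro k. eapply Rle_trans; [apply Rabs_fst_le_dist | apply Hu]. }
  destruct (choice (fun m k => (m <= k)%nat /\ Rabs (fst (u k) - l1) < / INR (S m)))
    as [pk Hpk].
  { intro m. apply Hl1, Rinv_0_lt_compat, lt_0_INR. lia. }
  destruct (bounded_real_seq_cluster (fun m => snd (u (pk m))) (snd p) c) as [l2 Hl2].
  { intro m. eapply Rle_trans; [apply Rabs_snd_le_dist | apply Hu]. }
  exists (l1, l2). intros r Hr N.
  destruct (archimed_cor1 (r / 2)) as [M [HM HM0]]; [lra|].
  destruct (Hl2 (r / 2) ltac:(lra) (max N M)) as [m [Hm Hm2]].
  destruct (Hpk m) as [Hpm Hpm2].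
  exists (pk m). split; [lia|].
  assert (HmM : / INR (S m) <= / INR M).
  { apply Rinv_le_contravar; [apply lt_0_INR; lia | apply le_INR; lia]. }
  eapply Rle_lt_trans; [apply dist_le_Rabs_add|]. simpl in *. lra.
Qed.

Lemma cluster_point_dist_le (u : nat -> pt) (l p : pt) (c : R) :
  cluster_point u l -> (forall k, dist (u k) p <= c) -> dist l p <= c.
Proof.
  intros Hl Hu. apply Rle_plus_epsilon. intros eps Heps.
  destruct (Hl eps Heps 0%nat) as [k [_ Hk]].
  pose proof (dist_triangle l (u k) p). rewrite dist_sym in Hk.
  specialize (Hu k). lra.
Qed.

Lemma cluster_point_omega_limit (f : pt -> pt) (z l : pt) (n : nat) :
  (0 < n)%nat -> cluster_point (fun m => Nat.iter (m * n) f z) l ->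
  omega_limit f z l.
Proof.
  intros Hn Hl r Hr N. destruct (Hl r Hr N) as [m [Hm Hd]].
  exists (m * n)%nat. split; [nia | exact Hd].
Qed.

Lemma iterZ_of_nat (f g : pt -> pt) (k : nat) (x : pt) :
  iterZ f g (Z.of_nat k) x = Nat.iter k f x.
Proof. destruct k; [reflexivity|]. simpl. now rewrite SuccNat2Pos.id_succ. Qed.

Lemma cont_pos_const (c : R) : 0 < c -> cont_pos (fun _ => c).
Proof.
  intro Hc. split; [|intros; exact Hc].
  intros p e He. exists 1. split; [lra|]. intros.
  now rewrite Rminus_diag, Rabs_R0.
Qed.

Lemma fixed_point_nonwandering (f : pt -> pt) (z0 : pt) :
  f z0 = z0 -> nonwandering f z0.
Proof.
  intros Hfix r Hr. exists 1%nat, z0. simpl. rewrite Hfix, dist_xx. repeat split; lia || lra.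
Qed.

Lemma exists_nonwandering_neq_fixed (f : pt -> pt) (z0 : pt) :
  f z0 = z0 -> ~ (forall x, nonwandering f x <-> x = z0) ->
  exists x, nonwandering f x /\ x <> z0.
Proof.
  intros Hfix Hnot. apply NNPP; intro Hnone.
  apply Hnot; intro x; split.
  - intro Hx. apply NNPP; intro Hxz. apply Hnone. now exists x.
  - intros ->. now apply fixed_point_nonwandering.
Qed.

Lemma cont_pos_local_jump (delta : pt -> R) (x : pt) :
  cont_pos delta ->
  exists r, 0 < r /\ forall a b, dist a x < r -> dist b x < r -> dist b a < delta b.
Proof.
  intros [Hcont Hpos]. pose proof (Hpos x) as Hx.
  destruct (Hcont x (delta x / 2) ltac:(lra)) as [rho [Hrho Hnear]].
  exists (Rmin rho (delta x / 4)). split; [apply Rmin_pos; lra|].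
  intros a b Ha Hb.
  pose proof (Rmin_l rho (delta x / 4)); pose proof (Rmin_r rho (delta x / 4)).
  assert (Hdb : Rabs (delta x - delta b) < delta x / 2).
  { apply Hnear. rewrite dist_sym. lra. }
  apply Rabs_def2 in Hdb as [Hdb1 Hdb2].
  pose proof (dist_triangle b x a). rewrite (dist_sym x a) in *. lra.
Qed.

Definition periodic_seq (f : pt -> pt) (y : pt) (n : nat) (k : Z) : pt :=
  Nat.iter (Z.to_nat (k mod Z.of_nat n)) f y.

Lemma periodic_seq_pseudo_orbit (f : pt -> pt) (delta : pt -> R) (y : pt) (n : nat) :
  (0 < n)%nat -> (forall p, 0 < delta p) ->
  dist (Nat.iter n f y) y < delta (Nat.iter n f y) ->
  pseudo_orbit f delta (periodic_seq f y n).
Proof.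
  intros Hn Hpos Hjump k. unfold periodic_seq.
  assert (Hnz : Z.of_nat n <> 0%Z) by lia.
  rewrite <- Z.add_mod_idemp_l by exact Hnz.
  pose proof (Z.mod_pos_bound k (Z.of_nat n) ltac:(lia)) as Hj.
  set (j := (k mod Z.of_nat n)%Z) in *.
  destruct (Z.eq_dec (j + 1) (Z.of_nat n)) as [Elast | Einner].
  - rewrite Elast, Z.mod_same by exact Hnz.
    replace n with (S (Z.to_nat j)) in Hjump by lia. exact Hjump.
  - rewrite Z.mod_small by lia.
    replace (Z.to_nat (j + 1)) with (S (Z.to_nat j)) by lia.
    simpl. rewrite dist_xx. apply Hpos.
Qed.

Lemma nonwandering_periodic_pseudo_orbit (f : pt -> pt) (delta : pt -> R) (x : pt) (eps : R) :
  cont_pos delta -> nonwandering f x -> 0 < eps ->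
  exists n y, (0 < n)%nat /\ dist y x < eps /\ pseudo_orbit f delta (periodic_seq f y n).
Proof.
  intros Hdelta Hx Heps.
  destruct (cont_pos_local_jump delta x Hdelta) as [r [Hr Hjump]].
  destruct (Hx (Rmin r eps) (Rmin_pos _ _ Hr Heps)) as [n [y [Hn [Hy Hny]]]].
  pose proof (Rmin_l r eps); pose proof (Rmin_r r eps).
  exists n, y. repeat split; [lia | lra|].
  apply periodic_seq_pseudo_orbit; [lia | apply Hdelta|].
  apply Hjump; lra.
Qed.

Lemma shadows_periodic_seq (f g : pt -> pt) (e : pt -> R) (y : pt) (n : nat) (z : pt) :
  shadows f g e (periodic_seq f y n) z ->
  forall m, dist y (Nat.iter (m * n) f z) < e y.
Proof.
  intros Hz m. specialize (Hz (Z.of_nat (m * n))).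
  rewrite iterZ_of_nat in Hz. unfold periodic_seq in Hz.
  destruct n as [|n].
  - rewrite Nat.mul_0_r in *. exact Hz.
  - rewrite Nat2Z.inj_mul, Z.mod_mul in Hz by lia. exact Hz.
Qed.

Theorem mainTheorem14 (f g : pt -> pt) (z0 : pt) :
  TA f g ->
  f z0 = z0 ->
  ~ (forall x, nonwandering f x <-> x = z0) ->
  exists y0 z : pt, y0 <> z0 /\ omega_limit f z y0.
Proof.
  intros [_ [_ Hshadowing]] Hfix Hnot.
  destruct (exists_nonwandering_neq_fixed f z0 Hfix Hnot) as [x [Hxnw Hxz]].
  set (c := dist x z0 / 3).
  assert (Hc : 0 < c) by (pose proof (dist_gt0 _ _ Hxz); unfold c; lra).
  destruct (Hshadowing _ (cont_pos_const c Hc)) as [delta [Hdelta Hshadow]].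
  destruct (nonwandering_periodic_pseudo_orbit f delta x c Hdelta Hxnw Hc)
    as [n [y [Hn [Hyx Hpo]]]].
  destruct (Hshadow _ Hpo) as [z Hz].
  assert (Hnear : forall m, dist (Nat.iter (m * n) f z) x <= 2 * c).
  { intro m. pose proof (shadows_periodic_seq f g _ y n z Hz m) as Hzy.
    pose proof (dist_triangle (Nat.iter (m * n) f z) y x).
    rewrite dist_sym in Hzy. lra. }
  destruct (bounded_seq_cluster_point _ _ _ Hnear) as [l Hl].
  exists l, z. split.
  - intros ->. pose proof (cluster_point_dist_le _ _ _ _ Hl Hnear) as Hz0x.
    rewrite dist_sym in Hz0x. unfold c in *. lra.
  - exact (cluster_point_omega_limit f z l n Hn Hl).
Qed.
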